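(* Let $M(i)$ be a maximal matching of $G(i)$, let $V_{cover}(i)$ be the set of endpoints of edges of $M(i)$, let $j\ge i$, and let $V'=V_{cover}(i\rightarrow j)$. Let $G'$ be the subgraph of $G(j)$ consisting of all edges of $G(j)$ between vertices of $V'$, together with, for each vertex $u\in V'$, up to $|V'|+1$ arbitrary edges of $G(j)$ from $u$ to vertices in $V\setminus V'$ (all such edges if there are fewer). Then for any maximal matching $M'$ of $G'$, the set of endpoints of edges of $M'$ is a vertex cover of $G(j)$ whose size is at most twice the size of a minimum vertex cover of $G(j)$.
   Context: A graph on vertex set $V$ undergoes a sequence of updates numbered $1,2,\dots$, each inserting or deleting one edge; $G(i)$ is the graph after the $i$-th update. A matching is maximal if no edge of the graph has both endpoints unmatched. $V_{cover}(i\rightarrow j)$ is obtained from $V_{cover}(i)$ by adding all endpoints of edges inserted during updates $i+1,\dots,j$; it is a vertex cover of $G(j)$. *)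

(* Graphs on a finite vertex set V: an (undirected, simple)
   graph is its edge set, a set of 2-element subsets of V. *)
From mathcomp Require Import all_boot.
Set Implicit Arguments. Unset Strict Implicit. Unset Printing Implicit Defensive.

Section Defs.
Variable V : finType.

Definition is_graph (E : {set {set V}}) : Prop :=
  forall e, e \in E -> #|e| = 2.

Definition update_step (E E' : {set {set V}}) : Prop :=
  exists e : {set V}, #|e| = 2 /\
    ((e \notin E /\ E' = e |: E) \/ (e \in E /\ E' = E :\ e)).

Definition endpoints (M : {set {set V}}) : {set V} := \bigcup_(e in M) e.

Definition is_matching (E M : {set {set V}}) : Prop :=
  M \subset E /\
  forall e f, e \in M -> f \in M -> e != f -> [disjoint e & f].

Definition maximal_matching (E M : {set {set V}}) : Prop :=
  is_matching E M /\
  forall e, e \in E -> ~ (e \subset ~: endpoints M).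

Definition vertex_cover (E : {set {set V}}) (C : {set V}) : Prop :=
  forall e, e \in E -> exists2 v, v \in e & v \in C.

Definition min_vc_size (E : {set {set V}}) : nat :=
  \big[minn/#|V|]_(C : {set V} | [forall e in E, e :&: C != set0]) #|C|.

(* edges inserted during updates i+1, ..., j of the sequence G
   (G k is the graph after the k-th update, G 0 the initial graph) *)
Definition inserted_edges (G : nat -> {set {set V}}) (i j : nat)
  : {set {set V}} :=
  \bigcup_(i.+1 <= k < j.+1) (G k :\: G k.-1).

Definition Vcover_to (G : nat -> {set {set V}}) (Vc : {set V}) (i j : nat)
  : {set V} :=
  Vc :|: endpoints (inserted_edges G i j).

Definition inner_edges (E : {set {set V}}) (W : {set V}) : {set {set V}} :=
  [set e in E | e \subset W].

Definition cross_edges (E : {set {set V}}) (W : {set V}) (u : V)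
  : {set {set V}} :=
  [set e in E | (u \in e) && ~~ (e \subset W)].

Definition sparsified (E : {set {set V}}) (W : {set V})
  (S : V -> {set {set V}}) : {set {set V}} :=
  inner_edges E W :|: \bigcup_(u in W) S u.

Definition valid_selection (E : {set {set V}}) (W : {set V})
  (S : V -> {set {set V}}) : Prop :=
  forall u, u \in W ->
    S u \subset cross_edges E W u /\
    #|S u| = minn #|cross_edges E W u| (#|W|).+1.

End Defs.

From mathcomp Require Import all_boot.
From mathcomp Require Import zify.

(* The set W = V_cover(i -> j) covers G(j): old edges are covered by the
   maximal matching M(i), new ones by their own endpoints.  Every edge of G'
   meets W, so the matching M' has at most |W| edges, and each of them has at
   most one endpoint outside W.  If an edge e of G(j) through u in W had no
   matched endpoint, then e is not in G', so the selection at u is full: its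
   |W|+1 edges all lie in G', hence their other endpoints, outside W, are all
   matched, which would give M' more than |W| edges.  The factor 2 comes from
   |endpoints M'| <= 2|M'| and the fact that a matching of G(j) is no larger
   than any vertex cover. *)
Set Implicit Arguments. Unset Strict Implicit. Unset Printing Implicit Defensive.

Section Graphs.
Variable V : finType.
Implicit Types (E F M : {set {set V}}) (C W : {set V}).

Lemma card_bigcup_le (I : finType) (A : {set I}) (F : I -> {set V}) :
  #|\bigcup_(a in A) F a| <= \sum_(a in A) #|F a|.
Proof.
elim/big_rec2: _ => [|a n U _ leUn]; first by rewrite cards0.
by rewrite (leq_trans (leq_card_setU _ _).1) ?leq_add2l.
Qed.

Lemma vertex_coverP E C :
  reflect (vertex_cover E C) [forall e in E, e :&: C != set0].
Proof.
apply: (iffP forall_inP) => [meetC e /meetC /set0Pn[v] | coverC e /coverC[v ev vC]].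
  by rewrite inE => /andP[ev vC]; exists v.
by apply/set0Pn; exists v; rewrite inE ev.
Qed.

Lemma vertex_coverS E F C : E \subset F -> vertex_cover F C -> vertex_cover E C.
Proof. by move=> /subsetP subEF coverC e /subEF /coverC. Qed.

Lemma is_graphS E F : E \subset F -> is_graph F -> is_graph E.
Proof. by move=> /subsetP subEF graphF e /subEF /graphF. Qed.

Lemma vertex_cover_setT E : is_graph E -> vertex_cover E [set: V].
Proof.
move=> graphE e /graphE card_e.
have /card_gt0P[v ev] : 0 < #|e| by rewrite card_e.
by exists v; rewrite ?inE.
Qed.

Lemma cards2_mem (e : {set V}) u :
  #|e| = 2 -> u \in e -> exists2 v, v != u & e = [set u; v].
Proof.
move=> /eqP /cards2P[x [y [neq_xy ->]]] /set2P[->|->]; first by exists y; rewrite // eq_sym.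
by exists x; rewrite // setUC.
Qed.

Lemma card_matching_le E M C : is_matching E M -> vertex_cover M C -> #|M| <= #|C|.
Proof.
case=> _ disjM /vertex_coverP/forall_inP meetC; set P := [set e :&: C | e in M].
have injC : {in M &, injective (fun e => e :&: C)}.
  move=> e f eM fM eCfC; apply/eqP; apply: contraNT (meetC e eM) => neq_ef.
  move/(disjM e f eM fM): neq_ef; rewrite -setI_eq0 => /eqP ef0.
  by rewrite -[e :&: C]setIid {2}eCfC setIACA ef0 set0I.
have trivP : trivIset P.
  apply/trivIsetP=> _ _ /imsetP[e eM ->] /imsetP[f fM ->] neq.
  have neq_ef : e != f by apply: contraNneq neq => ->.
  exact: disjointW (subsetIl _ _) (subsetIl _ _) (disjM e f eM fM neq_ef).
rewrite -(card_in_imset injC) -/P -sum1_card.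
apply: (@leq_trans (\sum_(B in P) #|B|)).
  by apply: leq_sum => _ /imsetP[e eM ->]; rewrite card_gt0 meetC.
rewrite (eqP trivP); apply/subset_leq_card/bigcupsP => _ /imsetP[e _ ->].
exact: subsetIr.
Qed.

Lemma card_endpoints_le M : is_graph M -> #|endpoints M| <= 2 * #|M|.
Proof.
move=> graphM; apply: leq_trans (card_bigcup_le _ _) _.
by rewrite (eq_bigr (fun=> 2)) // sum_nat_const mulnC.
Qed.

Lemma card_endpoints_setD_le M W :
  is_graph M -> vertex_cover M W -> #|endpoints M :\: W| <= #|M|.
Proof.
move=> graphM coverW; rewrite -[#|M|]sum1_card.
apply: (leq_trans _ (leq_trans (card_bigcup_le M (fun e => e :\: W)) _)).
  apply/subset_leq_card/subsetP => x /setDP[/bigcupP[e eM xe] xW].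
  by apply/bigcupP; exists e; rewrite // inE xe xW.
apply: leq_sum => e eM; have [w ew wW] := coverW e eM.
have [v _ ->] := cards2_mem (graphM e eM) ew.
rewrite -(cards1 v); apply/subset_leq_card/subsetP => x.
by rewrite !inE => /andP[xW /orP[/eqP xw|]] //; rewrite xw wW in xW.
Qed.

Lemma card_star_le F u :
  is_graph F -> (forall f, f \in F -> u \in f) -> #|F| <= #|endpoints F :\ u|.
Proof.
move=> graphF uF; apply: leq_trans (leq_imset_card (fun v => [set u; v]) _).
apply/subset_leq_card/subsetP => f fF.
have [v neq_vu def_f] := cards2_mem (graphF f fF) (uF f fF).
apply/imsetP; exists v => //; rewrite in_setD1 neq_vu.
by apply/bigcupP; exists f; rewrite // def_f !inE eqxx orbT.
Qed.

Lemma matching_le_min_vc_size E M :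
  is_graph E -> is_matching E M -> #|M| <= min_vc_size E.
Proof.
move=> graphE matchM; have [subME _] := matchM.
have le_cover C : vertex_cover E C -> #|M| <= #|C|.
  by move=> coverC; apply: card_matching_le matchM (vertex_coverS subME coverC).
apply: (big_ind (fun n => #|M| <= n)) => [|m n lm ln|C /vertex_coverP].
- by rewrite -cardsT; apply/le_cover/vertex_cover_setT.
- by rewrite leq_min lm ln.
- exact: le_cover.
Qed.

Section Updates.
Variable G : nat -> {set {set V}}.

Lemma is_graph_updates :
  is_graph (G 0) -> (forall k, update_step (G k) (G k.+1)) -> forall k, is_graph (G k).
Proof.
move=> graphG0 upd; elim=> // k graphGk e.
have [x [card_x [[_ ->]|[_ ->]]]] := upd k.
  by case/setU1P=> [->|]; [|apply: graphGk].
by case/setD1P=> _; apply: graphGk.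
Qed.

Lemma inserted_edgesS i j :
  i <= j -> inserted_edges G i j.+1 = inserted_edges G i j :|: (G j.+1 :\: G j).
Proof. by move=> le_ij; rewrite /inserted_edges big_nat_recr. Qed.

Lemma sub_inserted_edges i j : i <= j -> G j \subset G i :|: inserted_edges G i j.
Proof.
elim: j => [|j IH]; first by rewrite leqn0 => /eqP->; apply: subsetUl.
rewrite leq_eqVlt => /predU1P[<-|lt_ij]; first exact: subsetUl.
rewrite inserted_edgesS // setUA; apply/subsetP => e eGj1.
case: (boolP (e \in G j)) => [/(subsetP (IH lt_ij)) eGi | eGj]; rewrite inE ?eGi //.
by rewrite !inE (negbTE eGj) eGj1 orbT.
Qed.

Lemma Vcover_to_cover Vc i j :
  is_graph (G j) -> i <= j -> vertex_cover (G i) Vc ->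
  vertex_cover (G j) (Vcover_to G Vc i j).
Proof.
move=> graphGj le_ij coverVc e eGj.
case/setUP: (subsetP (sub_inserted_edges le_ij) e eGj) => [/coverVc[v ev vVc]|eIns].
  by exists v; rewrite // inE vVc.
have [v ev _] := vertex_cover_setT graphGj eGj.
by exists v; rewrite // inE; apply/orP; right; apply/bigcupP; exists e.
Qed.

End Updates.

Lemma maximal_matching_cover E M : maximal_matching E M -> vertex_cover E (endpoints M).
Proof.
case=> _ maxM e eE; have /subsetPn[v ev] : ~~ (e \subset ~: endpoints M).
  by apply/negP; apply: maxM.
by rewrite inE negbK; exists v.
Qed.

Section Sparsified.
Variables (E : {set {set V}}) (W : {set V}) (S : V -> {set {set V}}).
Hypotheses (graphE : is_graph E) (selS : valid_selection E W S).

Lemma cross_edges_sub u : cross_edges E W u \subset E.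
Proof. by apply/subsetP => e; rewrite inE => /andP[]. Qed.

Lemma mem_sparsified_sel u e : u \in W -> e \in S u -> e \in sparsified E W S.
Proof. by move=> uW eS; rewrite inE; apply/orP; right; apply/bigcupP; exists u. Qed.

Lemma sparsified_sub : sparsified E W S \subset E.
Proof.
apply/subsetP => e /setUP[/setIdP[]//|/bigcupP[u uW eS]].
have [subS _] := selS uW; exact: subsetP (@cross_edges_sub u) e (subsetP subS e eS).
Qed.

Lemma vertex_cover_sparsified : vertex_cover (sparsified E W S) W.
Proof.
move=> e /setUP[/setIdP[eE eW]|/bigcupP[u uW eS]].
  by have [v ev _] := vertex_cover_setT graphE eE; exists v; rewrite ?(subsetP eW).
have [subS _] := selS uW; move: (subsetP subS e eS); rewrite inE => /and3P[_ ue _].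
by exists u.
Qed.

Lemma card_selection_full u e :
  u \in W -> e \in cross_edges E W u -> e \notin S u -> #|S u| = #|W|.+1.
Proof.
move=> uW e_cross eS; have [subS card_S] := selS uW.
have : #|S u| < #|cross_edges E W u| by apply/proper_card/properP; split=> //; exists e.
by move: card_S; lia.
Qed.

Section MaximalMatching.
Variable M : {set {set V}}.
Hypothesis maxM : maximal_matching (sparsified E W S) M.

Lemma selection_nbrs_matched u :
  u \in W -> u \notin endpoints M -> endpoints (S u) :\ u \subset endpoints M :\: W.
Proof.
move=> uW uM; have [subS _] := selS uW.
apply/subsetP => x /setD1P[neq_xu /bigcupP[f fS xf]].
move: (subsetP subS f fS); rewrite inE => /and3P[fE uf fW].
have [v _ def_f] := cards2_mem (graphE fE) uf.
have xv : x = v by move: xf; rewrite def_f !inE (negbTE neq_xu) => /eqP.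
have [y yf yM] := maximal_matching_cover maxM (mem_sparsified_sel uW fS).
have neq_yu : y != u by apply: contraNneq uM => <-.
have yv : y = v by move: yf; rewrite def_f !inE (negbTE neq_yu) => /eqP.
rewrite inE xv -yv yM andbT; apply: contra fW => yW.
by rewrite def_f subUset !sub1set uW -yv yW.
Qed.

Lemma maximal_matching_sparsified_cover :
  vertex_cover E W -> vertex_cover E (endpoints M).
Proof.
move=> coverW e eE; have [u ue uW] := coverW e eE.
case: (pickP [pred v in e | v \in endpoints M]) => [v /andP[ev vM]|e_free].
  by exists v.
have eE' : e \notin sparsified E W S.
  apply/negP => /(proj2 maxM); apply; apply/subsetP => v ev.
  by rewrite inE; have := e_free v; rewrite /= ev /= => ->.
have e_cross : e \in cross_edges E W u.
  by rewrite inE eE ue; apply: contra eE' => eW; rewrite !inE eE eW.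
have eS : e \notin S u by apply: contra eE'; apply: mem_sparsified_sel.
have uM : u \notin endpoints M by have := e_free u; rewrite /= ue /= => ->.
have [[subM _] _] := maxM; have [subS _] := selS uW.
have graphS : is_graph (S u).
  exact: is_graphS (subset_trans subS (@cross_edges_sub u)) graphE.
have uS f : f \in S u -> u \in f.
  by move=> /(subsetP subS); rewrite inE => /and3P[].
have graphM := is_graphS (subset_trans subM sparsified_sub) graphE.
have coverMW := vertex_coverS subM vertex_cover_sparsified.
have : #|W|.+1 <= #|W|.
  rewrite -(card_selection_full uW e_cross eS).
  apply: leq_trans (card_star_le graphS uS) _.
  apply: leq_trans (subset_leq_card (selection_nbrs_matched uW uM)) _.
  apply: leq_trans (card_endpoints_setD_le graphM coverMW) _.
  exact: card_matching_le (proj1 maxM) coverMW.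
by rewrite ltnn.
Qed.

End MaximalMatching.
End Sparsified.
End Graphs.

Theorem lemma13 (V : finType) (G : nat -> {set {set V}})
  (HG0 : is_graph (G 0)) (Hupd : forall k, update_step (G k) (G k.+1))
  (i j : nat) (Hij : i <= j)
  (M : {set {set V}}) (HM : maximal_matching (G i) M)
  (S : V -> {set {set V}})
  (HS : valid_selection (G j) (Vcover_to G (endpoints M) i j) S)
  (M' : {set {set V}})
  (HM' : maximal_matching
           (sparsified (G j) (Vcover_to G (endpoints M) i j) S) M') :
  vertex_cover (G j) (endpoints M') /\
  #|endpoints M'| <= 2 * min_vc_size (G j).
Proof.
have graphGj := is_graph_updates HG0 Hupd (k := j).
have coverW := Vcover_to_cover graphGj Hij (maximal_matching_cover HM).
have [[subM' disjM'] _] := HM'.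
have matchM' : is_matching (G j) M' := conj (subset_trans subM' (sparsified_sub HS)) disjM'.
split; first exact: (maximal_matching_sparsified_cover graphGj HS HM' coverW).
apply: leq_trans (card_endpoints_le (is_graphS (proj1 matchM') graphGj)) _.
by rewrite leq_mul2l (matching_le_min_vc_size graphGj matchM') orbT.
Qed.
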